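(* With notation as in the context, for all $1\le i,j,h,k\le m+n$, $r\ge1$ and $x,y_1,\dots,y_r\in \mathrm{Mat}_\ell$, $$[t_{ij;\mathfrak{b}}(x),t_{hk;\mathfrak{b}}(y_1\otimes\cdots\otimes y_r)]=(-1)^{|i||j|+|i||h|+|j||h|}\sum_{s=1}^r\Big(t_{hj;\mathfrak{b}}(y_1\otimes\cdots\otimes y_{s-1})\,t_{ik;\mathfrak{b}}(xy_s\otimes y_{s+1}\otimes\cdots\otimes y_r)-t_{hj;\mathfrak{b}}(y_1\otimes\cdots\otimes y_{s-1}\otimes y_sx)\,t_{ik;\mathfrak{b}}(y_{s+1}\otimes\cdots\otimes y_r)\Big),$$ where $xy_s$, $y_sx$ are matrix products in $\mathrm{Mat}_\ell$, the bracket is the supercommutator in $U(\mathfrak{gl}_{M|N})$, and an empty tensor is interpreted as $1\in T(\mathrm{Mat}_\ell)$.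
   Context: Let $m,n,\ell$ be non-negative integers and $\mathfrak{b}=(\mathfrak{b}_1,\dots,\mathfrak{b}_{m+n})$ a sequence with $m$ entries $\delta$ and $n$ entries $\epsilon$; $|i|=\bar0$ if $\mathfrak{b}_i=\delta$, $|i|=\bar1$ if $\mathfrak{b}_i=\epsilon$. Let $\pi$ be a rectangular array of boxes with $m+n$ rows and $\ell$ columns, row $i$ having parity $|i|$; for $1\le i\le m+n$, $1\le c\le\ell$ let $i\star c$ denote the box in row $i$ (counted from the top) and column $c$ (counted from the left). Let $V=\mathbb{C}^{M|N}$ ($M=m\ell$, $N=n\ell$) have homogeneous basis $\{v_a\}$ indexed by boxes, $v_a$ of parity that of its row, and $\mathfrak{gl}_{M|N}=\mathrm{End}(V)$ with matrix units $e_{a,b}$. $\mathrm{Mat}_\ell$ is the space of complex $\ell\times\ell$ matrices with matrix units $e_{a,c}$, and $T(\mathrm{Mat}_\ell)$ its tensor algebra. For $1\le i,j\le m+n$ define the linear map $t_{ij;\mathfrak{b}}:T(\mathrm{Mat}_\ell)\to U(\mathfrak{gl}_{M|N})$ by $t_{ij;\mathfrak{b}}(1)=\delta_{ij}$, $t_{ij;\mathfrak{b}}(e_{a,c})=(-1)^{|i|}e_{i\star a,\,j\star c}$ (extended linearly to $\mathrm{Mat}_\ell$), and $t_{ij;\mathfrak{b}}(x_1\otimes\cdots\otimes x_r)=\sum_{1\le i_1,\dots,i_{r-1}\le m+n}t_{ii_1;\mathfrak{b}}(x_1)t_{i_1i_2;\mathfrak{b}}(x_2)\cdots t_{i_{r-1}j;\mathfrak{b}}(x_r)$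 for $x_1,\dots,x_r\in\mathrm{Mat}_\ell$. *)

From HB Require Import structures.
From mathcomp Require Import all_boot all_order all_algebra.
From mathcomp Require Import complex.
From mathcomp Require Import Rstruct.
From Stdlib Require Import Rdefinitions.
Set Implicit Arguments. Unset Strict Implicit. Unset Printing Implicit Defensive.
Import Order.TTheory GRing.Theory Num.Theory.
Local Open Scope ring_scope.

Definition C : fieldType := Rdefinitions.R[i].

(* Boxes of the rectangular array pi: row i (0-based, < m+n), column c (0-based, < l).
   The box  i * c  of the paper is the pair (i, c). *)
Definition box (mn l : nat) := ('I_mn * 'I_l)%type.

(* Parity of a box = parity of its row; b i = true means b_i = epsilon (odd). *)
Definition bpar (mn l : nat) (b : 'I_mn -> bool) (a : box mn l) : bool := b a.1.

Definition sgn {A : pzRingType} (p : bool) : A := (-1) ^+ p.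

(* Defining relations of U(gl_{M|N}) on the matrix units e_{a,b} (a,b boxes):
   e_ab e_cd - (-1)^{|e_ab||e_cd|} e_cd e_ab
     = delta_bc e_ad - (-1)^{|e_ab||e_cd|} delta_ad e_cb,
   where |e_ab| = |a| + |b|.  A family E : box -> box -> A in an associative
   C-algebra A satisfies these relations iff a -> E induces an algebra map
   U(gl_{M|N}) -> A. *)
Definition gl_rel (mn l : nat) (b : 'I_mn -> bool) (A : algType C)
    (E : box mn l -> box mn l -> A) : Prop :=
  forall a1 b1 c1 d1 : box mn l,
    let p := (bpar b a1 (+) bpar b b1) && (bpar b c1 (+) bpar b d1) in
    E a1 b1 * E c1 d1 - sgn p * (E c1 d1 * E a1 b1)
    = (b1 == c1)%:R * E a1 d1 - sgn p * ((a1 == d1)%:R * E c1 b1).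

Definition scomm {A : pzRingType} (pa pb : bool) (u v : A) : A :=
  u * v - sgn (pa && pb) * (v * u).

Definition t1 (mn l : nat) (b : 'I_mn -> bool) (A : algType C)
    (E : box mn l -> box mn l -> A) (i j : 'I_mn) (x : 'M[C]_l) : A :=
  \sum_(a < l) \sum_(c < l) (x a c * sgn (b i)) *: E (i, a) (j, c).

(* t_{ij;b} on a pure tensor x_1 (x) ... (x) x_r, represented by the list
   [:: x_1; ...; x_r]; the empty list is the unit 1 of T(Mat_l). *)
Fixpoint tb (mn l : nat) (b : 'I_mn -> bool) (A : algType C)
    (E : box mn l -> box mn l -> A) (i j : 'I_mn) (xs : seq 'M[C]_l) : A :=
  match xs with
  | [::] => (i == j)%:R
  | [:: x] => t1 b E i j x
  | x :: xs' => \sum_(p < mn) t1 b E i p x * tb b E p j xs'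
  end.

From HB Require Import structures.
From mathcomp Require Import all_boot all_order all_algebra.
From mathcomp Require Import ring.
Import GRing.Theory.
Local Open Scope ring_scope.

(* Up to the sign (-1)^|i|, t_{ij}(x) is the combination sum_{a,c} x_{ac} e_{i*a,j*c}
   of generators, so for one matrix on each side the defining relations of
   gl_{M|N} turn the bracket into two double Kronecker sums, which collapse to
   t_{ik}(xy) and t_{hj}(yx).  For a tensor, t_{hk}(y_1 (x) ys) is
   sum_p t_{hp}(y_1) t_{pk}(ys), and the super-Leibniz rule splits the bracket
   into the one-matrix case times t_{pk}(ys) plus t_{hp}(y_1) times the bracket
   with the shorter tensor; induction on the length, starting from the empty
   tensor (where both sides vanish), gives the identity. *)

Section Signs.
Variable A : algType C.

Lemma mulr_sgnl p (v : A) : sgn p * v = (sgn p : C) *: v.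
Proof. by case: p; rewrite /sgn ?expr0 ?expr1 ?mul1r ?scale1r ?mulN1r ?scaleN1r. Qed.

Lemma mulr_natlZ n (v : A) : n%:R * v = (n%:R : C) *: v.
Proof. by rewrite mulr_natl scaler_nat. Qed.

Lemma mulr_natrZ n (v : A) : v * n%:R = (n%:R : C) *: v.
Proof. by rewrite mulr_natr scaler_nat. Qed.

Lemma sgnD (R : pzRingType) p q : (sgn p : R) * sgn q = sgn (p (+) q).
Proof. by rewrite /sgn signr_addb. Qed.

End Signs.

Section Supercommutator.
Variables (A : algType C) (p q : bool).

Lemma scomm_suml I (r : seq I) (F : I -> A) v :
  scomm p q (\sum_(s <- r) F s) v = \sum_(s <- r) scomm p q (F s) v.
Proof. by rewrite /scomm mulr_suml !mulr_sumr -sumrB. Qed.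

Lemma scomm_sumr I (r : seq I) u (F : I -> A) :
  scomm p q u (\sum_(s <- r) F s) = \sum_(s <- r) scomm p q u (F s).
Proof. by rewrite /scomm mulr_sumr mulr_suml mulr_sumr -sumrB. Qed.

Lemma scommZl (c : C) (u v : A) : scomm p q (c *: u) v = c *: scomm p q u v.
Proof. by rewrite /scomm -scalerAl -!scalerAr scalerBr. Qed.

Lemma scommZr (c : C) (u v : A) : scomm p q u (c *: v) = c *: scomm p q u v.
Proof. by rewrite /scomm -scalerAl -!scalerAr scalerBr. Qed.

Lemma scommMr q' (u v w : A) :
  scomm p (q (+) q') u (v * w) = scomm p q u v * w + sgn (p && q) * (v * scomm p q' u w).
Proof.
rewrite /scomm !mulr_sgnl mulrBl mulrBr -scalerAl -scalerAr scalerBr scalerA sgnD.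
have -> : (p && q) (+) (p && q') = p && (q (+) q') by case: p; case: q; case: q'.
by rewrite !mulrA addrA subrK.
Qed.

Lemma scomm_lincomb l (x y : 'M[C]_l) (U W : 'I_l -> 'I_l -> A) :
  scomm p q (\sum_(a < l) \sum_(c < l) x a c *: U a c)
            (\sum_(d < l) \sum_(e < l) y d e *: W d e)
  = \sum_(a < l) \sum_(c < l) \sum_(d < l) \sum_(e < l)
      (x a c * y d e) *: scomm p q (U a c) (W d e).
Proof.
rewrite scomm_suml; apply: eq_bigr => a _; rewrite scomm_suml; apply: eq_bigr => c _.
rewrite scommZl scomm_sumr scaler_sumr; apply: eq_bigr => d _.
rewrite scomm_sumr scaler_sumr; apply: eq_bigr => e _.
by rewrite scommZr scalerA.
Qed.

End Supercommutator.

Section KroneckerSums.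
Variables (V : lmodType C) (l : nat).

Lemma sum_delta_scale (c : 'I_l) (f : 'I_l -> C) (F : 'I_l -> V) :
  \sum_(d < l) (f d * (c == d)%:R) *: F d = f c *: F c.
Proof.
rewrite (bigD1 c) //= eqxx mulr1 big1 ?addr0 // => d /negbTE.
by rewrite eq_sym => ->; rewrite mulr0 scale0r.
Qed.

Lemma sum_mulmx_delta (x y : 'M[C]_l) (F : 'I_l -> 'I_l -> V) :
  \sum_(a < l) \sum_(c < l) \sum_(d < l) \sum_(e < l)
    (x a c * y d e * (c == d)%:R) *: F a e
  = \sum_(a < l) \sum_(e < l) (x *m y) a e *: F a e.
Proof.
apply: eq_bigr => a _.
transitivity (\sum_(c < l) \sum_(e < l) (x a c * y c e) *: F a e).
  apply: eq_bigr => c _; rewrite exchange_big; apply: eq_bigr => e _.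
  exact: (sum_delta_scale c (fun d => x a c * y d e) (fun=> F a e)).
by rewrite exchange_big; apply: eq_bigr => e _; rewrite mxE scaler_suml.
Qed.

Lemma sum_mulmx_delta_swap (x y : 'M[C]_l) (F : 'I_l -> 'I_l -> V) :
  \sum_(a < l) \sum_(c < l) \sum_(d < l) \sum_(e < l)
    (x a c * y d e * (a == e)%:R) *: F d c
  = \sum_(d < l) \sum_(c < l) (y *m x) d c *: F d c.
Proof.
transitivity (\sum_(a < l) \sum_(c < l) \sum_(d < l) (x a c * y d a) *: F d c).
  apply: eq_bigr => a _; apply: eq_bigr => c _; apply: eq_bigr => d _.
  exact: (sum_delta_scale a (fun e => x a c * y d e) (fun=> F d c)).
rewrite exchange_big; under eq_bigr => c _ do rewrite exchange_big.
rewrite exchange_big; apply: eq_bigr => d _; apply: eq_bigr => c _.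
by rewrite mxE scaler_suml; apply: eq_bigr => a _; rewrite mulrC.
Qed.

Lemma sum_mulmx_delta_sub (x y : 'M[C]_l) (F G : 'I_l -> 'I_l -> V) :
  \sum_(a < l) \sum_(c < l) \sum_(d < l) \sum_(e < l)
    (x a c * y d e) *: ((c == d)%:R *: F a e - (a == e)%:R *: G d c)
  = \sum_(a < l) \sum_(e < l) (x *m y) a e *: F a e
    - \sum_(d < l) \sum_(c < l) (y *m x) d c *: G d c.
Proof.
rewrite -sum_mulmx_delta -sum_mulmx_delta_swap -sumrB; apply: eq_bigr => a _.
rewrite -sumrB; apply: eq_bigr => c _; rewrite -sumrB; apply: eq_bigr => d _.
by rewrite -sumrB; apply: eq_bigr => e _; rewrite scalerBr !scalerA.
Qed.

End KroneckerSums.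

Section Generators.
Variables (mn l : nat) (b : 'I_mn -> bool) (A : algType C).
Variable E : box mn l -> box mn l -> A.
Hypothesis hE : gl_rel b E.

Definition tmat (i j : 'I_mn) (x : 'M[C]_l) : A :=
  \sum_(a < l) \sum_(c < l) x a c *: E (i, a) (j, c).

Lemma t1_tmat i j x : t1 b E i j x = sgn (b i) *: tmat i j x.
Proof.
rewrite /t1 /tmat scaler_sumr; apply: eq_bigr => a _.
by rewrite scaler_sumr; apply: eq_bigr => c _; rewrite scalerA mulrC.
Qed.

Lemma sum_scale_tmat (c : C) i j (x : 'M[C]_l) :
  \sum_(a < l) \sum_(e < l) x a e *: (c *: E (i, a) (j, e)) = c *: tmat i j x.
Proof.
rewrite /tmat scaler_sumr; apply: eq_bigr => a _.
by rewrite scaler_sumr; apply: eq_bigr => e _; rewrite !scalerA mulrC.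
Qed.

Lemma scomm_E i j h k a c d e :
  scomm (b i (+) b j) (b h (+) b k) (E (i, a) (j, c)) (E (h, d) (k, e))
  = (c == d)%:R *: ((h == j)%:R *: E (i, a) (k, e))
    - (a == e)%:R *: ((sgn ((b i (+) b j) && (b h (+) b k)) * (i == k)%:R) *: E (h, d) (j, c)).
Proof.
rewrite /scomm (hE (i, a) (j, c) (h, d) (k, e)) /bpar /= !xpair_eqE.
rewrite !mulr_natlZ mulr_sgnl !scalerA -!mulnb !natrM [h == j]eq_sym.
by congr (_ *: _ - _ *: _); ring.
Qed.

Lemma scomm_tmat i j h k x y :
  scomm (b i (+) b j) (b h (+) b k) (tmat i j x) (tmat h k y)
  = (h == j)%:R *: tmat i k (x *m y)
    - (sgn ((b i (+) b j) && (b h (+) b k)) * (i == k)%:R) *: tmat h j (y *m x).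
Proof.
rewrite [LHS]scomm_lincomb.
under eq_bigr => a _ do under eq_bigr => c _ do under eq_bigr => d _ do
  under eq_bigr => e _ do rewrite scomm_E.
by rewrite sum_mulmx_delta_sub !sum_scale_tmat.
Qed.

Lemma scomm_t1 i j h k x y :
  scomm (b i (+) b j) (b h (+) b k) (t1 b E i j x) (t1 b E h k y)
  = sgn (b i && b j (+) b i && b h (+) b j && b h) *
    ((h == j)%:R * t1 b E i k (x *m y) - t1 b E h j (y *m x) * (i == k)%:R).
Proof.
rewrite !t1_tmat scommZl scommZr scomm_tmat mulr_natlZ mulr_natrZ mulr_sgnl.
rewrite !scalerBr !scalerA; congr (_ *: _ - _ *: _).
- case: (eqVneq h j) => [<-|_]; last by rewrite !(mulr0, mul0r).
  by rewrite sgnD mulrAC sgnD; case: (b i); case: (b h).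
- case: (eqVneq i k) => [<-|_]; last by rewrite !(mulr0, mul0r).
  by rewrite sgnD mulrA sgnD mulrAC sgnD; case: (b i); case: (b j); case: (b h).
Qed.

Lemma tb_cons i j x xs :
  tb b E i j (x :: xs) = \sum_(p < mn) t1 b E i p x * tb b E p j xs.
Proof.
case: xs => [|y ys] //=.
rewrite (bigD1 j) //= eqxx mulr1 big1 ?addr0 // => p /negbTE ->.
by rewrite mulr0.
Qed.

Definition cut_sum i j h k (x : 'M[C]_l) (ys : seq 'M[C]_l) : A :=
  \sum_(s < size ys)
    (tb b E h j (take s ys) * tb b E i k ((x *m nth 0 ys s) :: drop s.+1 ys)
     - tb b E h j (rcons (take s ys) (nth 0 ys s *m x)) * tb b E i k (drop s.+1 ys)).

Lemma cut_sum_cons i j h k x y ys :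
  cut_sum i j h k x (y :: ys)
  = (h == j)%:R * tb b E i k (x *m y :: ys) - t1 b E h j (y *m x) * tb b E i k ys
    + \sum_(p < mn) t1 b E h p y * cut_sum i j p k x ys.
Proof.
rewrite /cut_sum big_ord_recl; congr (_ + _); first by rewrite /= drop0.
under [RHS]eq_bigr do rewrite mulr_sumr.
rewrite exchange_big; apply: eq_bigr => s _; rewrite lift0.
by rewrite !tb_cons !mulr_suml -sumrB; apply: eq_bigr => p _; rewrite mulrBr !mulrA.
Qed.

Lemma scomm_t1_tb i j x ys h k :
  scomm (b i (+) b j) (b h (+) b k) (t1 b E i j x) (tb b E h k ys)
  = sgn (b i && b j (+) b i && b h (+) b j && b h) * cut_sum i j h k x ys.
Proof.
elim: ys h k => [|y ys IH] h k.
  rewrite /cut_sum big_ord0 mulr0 /=.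
  case: (eqVneq h k) => [<-|_]; last by rewrite /scomm mulr0 mul0r mulr0 subrr.
  by rewrite /scomm addbb andbF /sgn expr0 mul1r mulr1 mul1r subrr.
have parity p : b h (+) b k = (b h (+) b p) (+) (b p (+) b k) by rewrite addbA addbK.
rewrite tb_cons scomm_sumr cut_sum_cons mulrDr.
under eq_bigr => p _ do rewrite (parity p) scommMr scomm_t1 IH.
rewrite big_split; congr (_ + _).
  under eq_bigr do rewrite -mulrA mulrBl.
  rewrite -mulr_sumr sumrB tb_cons mulr_sumr; congr (_ * (_ - _)).
    by apply: eq_bigr => p _; rewrite mulrA.
  rewrite (bigD1 i) //= eqxx mulr1 big1 ?addr0 // => p.
  by rewrite eq_sym => /negbTE ->; rewrite mulr0 mul0r.
rewrite mulr_sumr; apply: eq_bigr => p _.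
rewrite !mulr_sgnl -scalerAr scalerA sgnD.
by case: (b i); case: (b j); case: (b h); case: (b p).
Qed.

End Generators.

Theorem lemma4p1 (m n l : nat) (b : 'I_(m + n) -> bool)
  (hb : #|[pred i | ~~ b i]| = m)
  (A : algType C) (E : box (m + n) l -> box (m + n) l -> A)
  (hE : gl_rel b E)
  (i j h k : 'I_(m + n)) (x : 'M[C]_l) (ys : seq 'M[C]_l)
  (hr : (1 <= size ys)%N) :
  scomm (b i (+) b j) (b h (+) b k) (tb b E i j [:: x]) (tb b E h k ys)
  = sgn (b i && b j (+) b i && b h (+) b j && b h) *
    \sum_(s < size ys)
      (tb b E h j (take s ys) * tb b E i k ((x *m nth 0 ys s) :: drop s.+1 ys)
       - tb b E h j (rcons (take s ys) (nth 0 ys s *m x)) * tb b E i k (drop s.+1 ys)).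
Proof. exact: (scomm_t1_tb _ _ _ _ _ hE i j x ys h k). Qed.
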